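(* Let $\mathbf{X}=(X_n)_{n\ge0}$ be a second-order stationary process with spectral density $f_X$ on $[-\pi,\pi)$ having finitely many, $N_X\ge1$, singular frequencies. Let $k\ge1$ be an integer and $Y_n=X_{kn}$ (deterministic sampling), and let $N_Y$ be the number of singular frequencies of the spectral density $f_Y$ of $\mathbf{Y}$. Then (a) $1\le N_Y\le N_X$; (b) $N_Y<N_X$ if and only if $f_X$ has at least two singular frequencies $\lambda_0\ne\lambda_1$ such that $\lambda_0-\lambda_1=\frac{2\pi j^*}{k}$ for some integer $j^*$.
   Context: A singular frequency of a spectral density $f$ on $[-\pi,\pi)$ is a point $\lambda_0\in[-\pi,\pi)$ at which $f$ is unbounded (i.e. $f$ is unbounded on every neighbourhood of $\lambda_0$). For deterministic sampling with step $k$ the spectral density of $\mathbf{Y}$ is $f_Y(\lambda)=\frac{1}{2\ell+1}\sum_{j=-\ell}^{\ell}f_X\big(\frac{\lambda-2\pi j}{2\ell+1}\big)$ if $k=2\ell+1$, and $f_Y(\lambda)=\frac{1}{2\ell}\Big(\sum_{j=-\ell+1}^{\ell-1}f_X\big(\frac{\lambda-2\pi j}{2\ell}\big)+f_X\big(\frac{\lambda-2\pi\ell\,\mathrm{sgn}(\lambda)}{2\ell}\big)\Big)$ if $k=2\ell$. *)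

From HB Require Import structures.
From mathcomp Require Import all_boot all_order all_algebra.
From mathcomp Require Import finmap.
From mathcomp Require Import all_classical all_reals all_analysis.
Set Implicit Arguments. Unset Strict Implicit. Unset Printing Implicit Defensive.
Import Order.TTheory GRing.Theory Num.Theory.
Local Open Scope classical_set_scope.
Local Open Scope ring_scope.

Definition singular_freq {R : realType} (f : R -> R) (l0 : R) : Prop :=
  -pi <= l0 < pi /\
  forall (M e : R), 0 < e ->
    exists l : R, [/\ -pi <= l < pi,
      (exists m : int, `|l - l0 + m%:~R * (2 * pi)| < e) & M < f l].

Definition singular_set {R : realType} (f : R -> R) : set R :=
  [set l | singular_freq f l].

(* number of singular frequencies (meaningful when the set is finite) *)
Definition nb_singular {R : realType} (f : R -> R) : nat :=
  (#|` fset_set (singular_set f) |)%fset.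

(* spectral density of Y_n = X_{kn} (deterministic sampling with step k) *)
Definition sampled_density {R : realType} (k : nat) (f : R -> R) (l : R) : R :=
  let ell := k./2 in
  if odd k then
    (k%:R)^-1 * \sum_(0 <= i < k)
        f ((l - 2 * pi * ((i%:Z - ell%:Z)%:~R)) / k%:R)
  else
    (k%:R)^-1 * (\sum_(0 <= i < k.-1)
        f ((l - 2 * pi * ((i%:Z - (ell.-1)%:Z)%:~R)) / k%:R)
      + f ((l - 2 * pi * ell%:R * Num.sg l) / k%:R)).

From HB Require Import structures.
From mathcomp Require Import all_boot all_order all_algebra finmap.
From mathcomp Require Import all_classical all_reals all_analysis.
From mathcomp Require Import ring lra zify.
Import Order.TTheory GRing.Theory Num.Theory.
Local Open Scope classical_set_scope.
Local Open Scope ring_scope.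

(* Up to the factor 1/k, f_Y(l) is the sum of f_X over the aliases of l, the
   points a of [-pi, pi) with k a = l (mod 2 pi).  As f_X >= 0, f_Y is
   unbounded near l iff f_X is unbounded near one of these aliases, so the
   singular frequencies of f_Y are the images of those of f_X under
   x |-> k x (mod 2 pi).  The image of a nonempty finite set is nonempty and no
   larger, and strictly smaller iff two points have the same image, i.e. differ
   by a multiple of 2 pi / k. *)

Lemma card_imfset_ltP (T U : choiceType) (f : T -> U) (A : {fset T}) :
  (#|` (f @` A)%fset| < #|` A|)%N <->
  exists x0 x1, [/\ x0 \in A, x1 \in A, x0 != x1 & f x0 = f x1].
Proof.
rewrite ltn_neqAle leq_imfset_card andbT; split.
  move=> /card_in_imfsetP ninj; apply: contrapT => nex.
  apply: ninj => x0 x1 h0 h1 e; apply: contrapT => /eqP ne; apply: nex.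
  by exists x0, x1.
move=> [x0 [x1 [h0 h1 ne e]]]; apply/card_in_imfsetP => inj.
by move/eqP: ne; apply; exact: inj.
Qed.

Lemma mem_shifted_index_iota (d : int) n c :
  (c \in [seq i%:Z - d | i <- index_iota 0 n]) = (- d <= c < n%:Z - d)%R.
Proof.
apply/mapP/idP => [[i + ->]|hc]; first by rewrite mem_index_iota; lia.
by exists (absz (c + d)); rewrite ?mem_index_iota; lia.
Qed.

Lemma natr_even_half (R : pzSemiRingType) {k} :
  ~~ odd k -> (k%:R : R) = 2 * (k./2)%:R.
Proof.
by move=> /negbTE ev; rewrite -{1}(odd_double_half k) ev add0n -mul2n natrM.
Qed.

Section Circle.
Context {R : realType}.
Implicit Types (f : R -> R) (a e l x y z M : R).

Definition eqmod2pi x y := exists m : int, x = y + m%:~R * (2 * pi).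

Lemma eqmod2pi_refl x : eqmod2pi x x.
Proof. by exists 0; rewrite mul0r addr0. Qed.

Lemma eqmod2pi_sym {x y} : eqmod2pi x y -> eqmod2pi y x.
Proof. by move=> [m ->]; exists (- m); rewrite intrN; ring. Qed.

Lemma eqmod2pi_trans {x y z} : eqmod2pi x y -> eqmod2pi y z -> eqmod2pi x z.
Proof. by move=> [m ->] [n ->]; exists (n + m); rewrite intrD; ring. Qed.

Lemma eqmod2pi_mulr k {x y} : eqmod2pi x y -> eqmod2pi (k%:R * x) (k%:R * y).
Proof. by move=> [m ->]; exists (k%:Z * m); rewrite intrM; ring. Qed.

Lemma eqmod2pi_itv x y : -pi <= x < pi -> -pi <= y < pi -> eqmod2pi x y -> x = y.
Proof.
move=> hx hy [t ht]; have hp := pi_gt0 R.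
have t1 : t < 1 by rewrite -(ltr_int R); nra.
have t2 : 0 < t + 1 by rewrite -(ltr_int R) intrD; nra.
have t0 : t = 0 by lia.
by rewrite ht t0 mul0r addr0.
Qed.

Definition wrap z : R := z - (Num.floor ((z + pi) / (2 * pi)))%:~R * (2 * pi).

Lemma wrap_itv z : -pi <= wrap z < pi.
Proof.
have hp := pi_gt0 R; rewrite /wrap.
have := floor_itv ((z + pi) / (2 * pi)); rewrite intrD => /andP[h1 h2].
have e : (z + pi) / (2 * pi) * (2 * pi) = z + pi by field; lra.
nra.
Qed.

Lemma eqmod2pi_wrap z : eqmod2pi z (wrap z).
Proof. by exists (Num.floor ((z + pi) / (2 * pi))); rewrite /wrap subrK. Qed.

Lemma wrap_eqmod z y : -pi <= y < pi -> eqmod2pi z y -> wrap z = y.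
Proof.
move=> hy hzy; apply: eqmod2pi_itv (wrap_itv z) hy _.
exact: eqmod2pi_trans (eqmod2pi_sym (eqmod2pi_wrap z)) hzy.
Qed.

Lemma wrap_eqP x y : wrap x = wrap y <-> eqmod2pi x y.
Proof.
split => [exy|hxy]; last first.
  exact: wrap_eqmod (wrap_itv y) (eqmod2pi_trans hxy (eqmod2pi_wrap y)).
apply: eqmod2pi_trans (eqmod2pi_wrap x) _.
by rewrite exy; exact: eqmod2pi_sym (eqmod2pi_wrap y).
Qed.

Lemma eq_wrap_mulr {k x y} : (0 < k)%N ->
  wrap (k%:R * x) = wrap (k%:R * y) <->
  exists j : int, x - y = 2 * pi * j%:~R / k%:R.
Proof.
move=> k0; have kN0 : (k%:R : R) != 0 by rewrite pnatr_eq0 -lt0n.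
rewrite wrap_eqP; split => -[j hj]; exists j.
  by apply: (mulfI kN0); rewrite mulrBr hj; field.
by rewrite -[x](subrK y) hj; field.
Qed.

Definition close2pi a z e := exists m : int, `|a - z + m%:~R * (2 * pi)| < e.

Lemma close2pi_eqmod a a' z z' e :
  eqmod2pi a' a -> eqmod2pi z' z -> close2pi a z e -> close2pi a' z' e.
Proof.
move=> [p ->] [q ->] [m hm]; exists (m - p + q).
by rewrite !intrD intrN; congr (`|_| < _): hm; ring.
Qed.

Lemma close2pi_mulr {k a z e} : (0 < k)%N ->
  close2pi a z e -> close2pi (k%:R * a) (k%:R * z) (k%:R * e).
Proof.
move=> k0 [m hm]; exists (k%:Z * m); have kp : (0 : R) < k%:R by rewrite ltr0n.
by rewrite intrM -mulrBr -mulrA -mulrDr normrM gtr0_norm // ltr_pM2l.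
Qed.

Definition bounded_near f z e M :=
  forall l, -pi <= l < pi -> close2pi l z e -> f l <= M.

Definition unbounded_near f z :=
  forall M e, 0 < e -> exists l, [/\ -pi <= l < pi, close2pi l z e & M < f l].

Lemma unbounded_nearPn f z :
  ~ unbounded_near f z -> exists M e, 0 < e /\ bounded_near f z e M.
Proof.
move=> nu; apply: contrapT => nb; apply: nu => M e e0.
apply: contrapT => nl; apply: nb; exists M, e; split => // l hl hc.
by rewrite leNgt; apply/negP => hM; apply: nl; exists l.
Qed.

Lemma bounded_near_le f z e e' M M' : e' <= e -> M <= M' ->
  bounded_near f z e M -> bounded_near f z e' M'.
Proof.
move=> ee MM fb l hl [m hm]; apply: le_trans MM; apply: fb => //.
by exists m; exact: lt_le_trans ee.
Qed.

Lemma bounded_near_eqmod f z z' e M : eqmod2pi z' z ->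
  bounded_near f z e M -> bounded_near f z' e M.
Proof.
move=> hz fb l hl hc; apply: fb => //.
exact: close2pi_eqmod (eqmod2pi_refl l) (eqmod2pi_sym hz) hc.
Qed.

Lemma bounded_near_uniform {f} {z : nat -> R} {n} :
  (forall i, (i < n)%N -> exists M e, 0 < e /\ bounded_near f (z i) e M) ->
  exists M e, 0 < e /\ forall i, (i < n)%N -> bounded_near f (z i) e M.
Proof.
elim: n => [|n IH] fb; first by exists 0, 1; split.
have [M [e [e0 hb]]] := IH (fun i hi => fb i (ltnW hi)).
have [Mn [en [en0 hbn]]] := fb n (ltnSn n).
exists (Num.max M Mn), (Num.min e en); split; first by rewrite lt_min e0 en0.
move=> i; rewrite ltnS leq_eqVlt => /orP[/eqP->|hi].
  by apply: bounded_near_le hbn; rewrite ?ge_min ?le_max lexx orbT.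
by apply: bounded_near_le (hb i hi); rewrite ?ge_min ?le_max lexx.
Qed.

Lemma unbounded_near_eqmod f z z' : eqmod2pi z' z ->
  unbounded_near f z -> unbounded_near f z'.
Proof.
move=> hz fu M e e0; have [l [hl hc hM]] := fu M e e0; exists l; split => //.
exact: close2pi_eqmod (eqmod2pi_refl l) hz hc.
Qed.

Lemma singular_freq_wrap f z : unbounded_near f z -> singular_freq f (wrap z).
Proof.
move=> fu; split; first exact: wrap_itv.
exact: unbounded_near_eqmod (eqmod2pi_sym (eqmod2pi_wrap z)) fu.
Qed.

End Circle.

Section SampledDensity.
Context {R : realType}.
Implicit Types (k : nat) (f : R -> R) (a e l x y M : R) (c : int).

Definition sampled_arg k l c : R := (l - 2 * pi * c%:~R) / k%:R.

(* sampled_density k f l sums f over the sampled_arg k l c, c in this list: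
   these are the aliases of l, except that for even k and l = 0 the alias -pi
   is missing and 0 occurs twice, hence the strict bound -pi < a below. *)
Definition sampled_shifts k l : seq int :=
  let ell := k./2 in
  if odd k then [seq i%:Z - ell%:Z | i <- index_iota 0 k]
  else [seq i%:Z - (ell.-1)%:Z | i <- index_iota 0 k.-1] ++ [:: ell%:Z * sgz l].

Lemma sampled_densityE k f l :
  sampled_density k f l =
  k%:R^-1 * \sum_(c <- sampled_shifts k l) f (sampled_arg k l c).
Proof.
rewrite /sampled_density /sampled_shifts /sampled_arg /=.
case: ifP => _; first by rewrite big_map.
rewrite big_cat big_map big_seq1 /= rmorphM /= -sgrEz mulrA.
by congr (_ * (_ + f ((_ - _) / _))); rewrite mulrA.
Qed.

Lemma size_sampled_shifts k l : (0 < k)%N -> size (sampled_shifts k l) = k.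
Proof.
move=> k0; rewrite /sampled_shifts; case: ifP => _.
  by rewrite size_map size_iota subn0.
by rewrite size_cat size_map size_iota subn0 addn1 prednK.
Qed.

Lemma small_shift_range k l c : -pi <= l < pi ->
  2 * c + 1 <= k%:Z -> 1 - 2 * c <= k%:Z ->
  - (k%:R * pi) <= l - 2 * pi * c%:~R < k%:R * pi.
Proof.
move=> hl; rewrite -!(ler_int R) => h1 h2.
have {h1} : 2 * (c%:~R : R) + 1 <= k%:R by move: h1; rewrite intrD intrM.
have {h2} : 1 - 2 * (c%:~R : R) <= k%:R by move: h2; rewrite intrB intrM.
have := pi_gt0 R; nra.
Qed.

Lemma sampled_shifts_range k l c : (0 < k)%N -> -pi <= l < pi ->
  c \in sampled_shifts k l -> - (k%:R * pi) <= l - 2 * pi * c%:~R < k%:R * pi.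
Proof.
move=> k0 hl; have hk := odd_double_half k; rewrite /sampled_shifts.
case: ifP hk => odd_k hk.
  by rewrite mem_shifted_index_iota => hc; apply: small_shift_range; lia.
rewrite mem_cat mem_shifted_index_iota mem_seq1 => /orP[hc|/eqP->].
  by apply: small_shift_range; lia.
have hp := pi_gt0 R.
have ell1 : (1 : R) <= (k./2)%:R by rewrite ler1n; lia.
rewrite intrM -sgrEz (natr_even_half R (negbT odd_k)).
have [l0|l0|->] := ltrgtP l 0.
- by rewrite ltr0_sg // mulrN1; nra.
- by rewrite gtr0_sg // mulr1; nra.
- by rewrite sgr0 !mulr0 subr0; nra.
Qed.

Lemma mem_sampled_shifts k l c : -pi <= l < pi ->
  - (k%:R * pi) < l - 2 * pi * c%:~R < k%:R * pi -> c \in sampled_shifts k l.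
Proof.
move=> hl hc; have hp := pi_gt0 R.
have hck : (2 * c < k%:Z + 1) && (- (k%:Z + 1) < 2 * c).
  by rewrite -!(ltr_int R) intrD intrN intrD intrM; apply/andP; split; nra.
have hk := odd_double_half k; rewrite /sampled_shifts.
case: ifP hk => odd_k hk; first by rewrite mem_shifted_index_iota; lia.
rewrite mem_cat mem_shifted_index_iota mem_seq1.
have [//|hout] := boolP (- ((k./2).-1)%:Z <= c < (k.-1)%:Z - ((k./2).-1)%:Z).
apply/orP; right; move: hc; rewrite (natr_even_half R (negbT odd_k)).
have [->|->] : c = (k./2)%:Z \/ c = - (k./2)%:Z by lia.
- move=> hc; suff /gtr0_sgz-> : 0 < l by rewrite mulr1.
  nra.
- rewrite intrN => hc; suff /ltr0_sgz-> : l < 0 by rewrite mulrN1.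
  nra.
Qed.

Lemma mulr_sampled_arg k l c : (0 < k)%N ->
  k%:R * sampled_arg k l c = l + (- c)%:~R * (2 * pi).
Proof.
move=> k0; have kN0 : (k%:R : R) != 0 by rewrite pnatr_eq0 -lt0n.
by rewrite /sampled_arg intrN; field.
Qed.

Lemma sampled_arg_itv k l c : (0 < k)%N -> -pi <= l < pi ->
  c \in sampled_shifts k l -> -pi <= sampled_arg k l c < pi.
Proof.
move=> k0 hl /(sampled_shifts_range k l c k0 hl) /andP[h1 h2].
have kp : (0 : R) < k%:R by rewrite ltr0n.
by rewrite /sampled_arg ler_pdivlMr // ltr_pdivrMr // mulNr [pi * _]mulrC h1.
Qed.

Lemma sampled_arg_eqmod k l a : (0 < k)%N -> -pi <= l < pi -> -pi < a < pi ->
  eqmod2pi (k%:R * a) l ->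
  exists2 c, c \in sampled_shifts k l & a = sampled_arg k l c.
Proof.
move=> k0 hl /andP[a1 a2] [j hj]; have kp : (0 : R) < k%:R by rewrite ltr0n.
exists (- j); last first.
  by apply: (mulfI (lt0r_neq0 kp)); rewrite mulr_sampled_arg // opprK.
apply: mem_sampled_shifts => //.
by rewrite intrN mulrN opprK; apply/andP; split; nra.
Qed.

Lemma sampled_density_le k f l M : (0 < k)%N -> -pi <= l < pi ->
  (forall a, -pi <= a < pi -> eqmod2pi (k%:R * a) l -> f a <= M) ->
  sampled_density k f l <= M.
Proof.
move=> k0 hl fM; have kp : (0 : R) < k%:R by rewrite ltr0n.
rewrite sampled_densityE ler_pdivrMl // big_seq.
apply: (@le_trans _ _ (\sum_(c <- sampled_shifts k l | c \in sampled_shifts k l) M)).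
  apply: ler_sum => c hc; apply: fM; first exact: sampled_arg_itv.
  by exists (- c); exact: mulr_sampled_arg.
by rewrite -big_seq big_const_seq count_predT iter_addr_0 size_sampled_shifts // mulr_natl.
Qed.

Lemma le_sampled_density k f l a : (0 < k)%N ->
  (forall x, -pi <= x < pi -> 0 <= f x) -> -pi <= l < pi -> -pi < a < pi ->
  eqmod2pi (k%:R * a) l -> f a <= k%:R * sampled_density k f l.
Proof.
move=> k0 f0 hl ha hka; have kN0 : (k%:R : R) != 0 by rewrite pnatr_eq0 -lt0n.
have [c hc ->] := sampled_arg_eqmod k l a k0 hl ha hka.
rewrite sampled_densityE mulrA mulfV // mul1r (perm_big _ (perm_to_rem hc)) /=.
rewrite big_cons lerDl big_seq sumr_ge0 // => c' /mem_rem hc'.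
exact/f0/sampled_arg_itv.
Qed.

Lemma sampled_density_bounded_near {k f y e M} : (0 < k)%N ->
  (forall n : int, bounded_near f ((y + n%:~R * (2 * pi)) / k%:R) e M) ->
  bounded_near (sampled_density k f) y (k%:R * e) M.
Proof.
move=> k0 fb l hl [m hm]; have kp : (0 : R) < k%:R by rewrite ltr0n.
apply: sampled_density_le => // a ha [j hj]; apply: (fb (j - m)) => //.
exists 0; rewrite mul0r addr0.
have -> : a - (y + (j - m)%:~R * (2 * pi)) / k%:R =
    (l - y + m%:~R * (2 * pi)) / k%:R.
  have -> : a = (l + j%:~R * (2 * pi)) / k%:R by rewrite -hj mulrC mulKf ?lt0r_neq0.
  by rewrite intrB; field; exact: lt0r_neq0.
by rewrite normrM normfV (gtr0_norm kp) ltr_pdivrMr // [e * _]mulrC.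
Qed.

Lemma singular_freq_sampled {k f x} : (0 < k)%N ->
  (forall l, -pi <= l < pi -> 0 <= f l) ->
  singular_freq f x -> singular_freq (sampled_density k f) (wrap (k%:R * x)).
Proof.
move=> k0 f0 [_ fu]; split; first exact: wrap_itv.
move=> M e e0; have kp : (0 : R) < k%:R by rewrite ltr0n.
(* the bound f (-pi) keeps the witness l away from -pi, see sampled_shifts *)
have [l [hl hc]] := fu (Num.max (k%:R * M) (f (-pi))) (e / k%:R) (divr_gt0 e0 kp).
rewrite gt_max => /andP[hkM hpi].
have hl' : -pi < l < pi.
  case/andP: hl => l1 ->; rewrite andbT lt_neqAle l1 andbT.
  by apply: contraTneq hpi => <-; rewrite ltxx.
exists (wrap (k%:R * l)); split; first exact: wrap_itv.
  have := close2pi_mulr k0 hc; rewrite mulrCA mulfV ?mulr1 ?lt0r_neq0 //.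
  by apply: close2pi_eqmod; exact: eqmod2pi_sym (eqmod2pi_wrap _).
rewrite -(ltr_pM2l kp); apply: lt_le_trans hkM _.
by apply: le_sampled_density => //; [exact: wrap_itv | exact: eqmod2pi_wrap].
Qed.

Lemma singular_freq_sampled_inv {k f y} : (0 < k)%N ->
  singular_freq (sampled_density k f) y ->
  exists x, singular_freq f x /\ wrap (k%:R * x) = y.
Proof.
move=> k0 [hy fYu]; have kp : (0 : R) < k%:R by rewrite ltr0n.
pose z (n : int) := (y + n%:~R * (2 * pi)) / k%:R.
have [[n fu]|nfu] := pselect (exists n, unbounded_near f (z n)).
  exists (wrap (z n)); split; first exact: singular_freq_wrap.
  apply: wrap_eqmod => //.
  apply: eqmod2pi_trans (eqmod2pi_mulr k (eqmod2pi_sym (eqmod2pi_wrap (z n)))) _.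
  by exists n; rewrite /z mulrCA mulfV ?mulr1 ?lt0r_neq0.
have fb i : (i < k)%N -> exists M e, 0 < e /\ bounded_near f (z i) e M.
  by move=> _; apply: unbounded_nearPn => fu; apply: nfu; exists i.
have [M [e [e0 hb]]] := bounded_near_uniform fb.
have fbZ n : bounded_near f (z n) e M.
  have kZ0 : k%:Z != 0 by rewrite eqz_nat -lt0n.
  have r0 : (0 <= (n %% k%:Z)%Z)%R := modz_ge0 n kZ0.
  have rk : (absz (n %% k%:Z)%Z < k)%N.
    by rewrite -ltz_nat gez0_abs // ltz_pmod // ltz_nat.
  apply: bounded_near_eqmod (hb _ rk); rewrite gez0_abs //; exists (n %/ k%:Z)%Z.
  rewrite /z {1}(divz_eq n k%:Z) intrD intrM.
  by field; exact: lt0r_neq0.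
have [l [hl hc hM]] := fYu M (k%:R * e) (mulr_gt0 kp e0).
by move: hM; rewrite ltNge (sampled_density_bounded_near k0 fbZ l hl hc).
Qed.

Lemma singular_set_sampled {k f} : (0 < k)%N ->
  (forall l, -pi <= l < pi -> 0 <= f l) ->
  singular_set (sampled_density k f) = (fun x => wrap (k%:R * x)) @` singular_set f.
Proof.
move=> k0 f0; apply/seteqP; split => [y /= /(singular_freq_sampled_inv k0)|_ [x fx <-]].
  by move=> [x [fx <-]]; exists x.
exact: singular_freq_sampled.
Qed.

End SampledDensity.

Theorem proposition4p2 (R : realType) (fX : R -> R) (k : nat) :
  (forall l : R, -pi <= l < pi -> 0 <= fX l) ->
  (lebesgue_measure : set R -> \bar R).-integrable `[-pi, pi[ (EFin \o fX) ->
  finite_set (singular_set fX) ->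
  (1 <= nb_singular fX)%N ->
  (1 <= k)%N ->
  let fY := sampled_density k fX in
  [/\ finite_set (singular_set fY),
      (1 <= nb_singular fY <= nb_singular fX)%N &
      ((nb_singular fY < nb_singular fX)%N <->
       exists l0 l1 : R, [/\ singular_freq fX l0, singular_freq fX l1, l0 != l1 &
         exists j : int, l0 - l1 = 2 * pi * j%:~R / k%:R])].
Proof.
move=> fX0 _ finX nX k0 fY.
have memX x : x \in fset_set (singular_set fX) <-> singular_freq fX x.
  by rewrite in_fset_set // inE.
rewrite /nb_singular /fY (singular_set_sampled k0 fX0) fset_set_image //; split.
- exact: finite_image.
- rewrite leq_imfset_card andbT cardfs_gt0.
  have /fset0Pn[x hx] : fset_set (singular_set fX) != fset0 by rewrite -cardfs_gt0.
  by apply/fset0Pn; exists (wrap (k%:R * x)); exact: in_imfset.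
- rewrite card_imfset_ltP; split.
    move=> [x0 [x1 [/memX h0 /memX h1 ne /(eq_wrap_mulr k0) hj]]].
    by exists x0, x1.
  move=> [x0 [x1 [h0 h1 ne /(eq_wrap_mulr k0) hj]]].
  by exists x0, x1; split => //; exact/memX.
Qed.
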